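(* Let $G\in\mathcal{V}_{\sigma\ell\mathbb{G}}$, $(f_n)_{n\ge1}\subseteq G$ and $g\in G$. Then $g=\sup_{n\ge1}f_n$ if and only if $g=\bigvee_{n\ge1}^g f_n$ and $f_n\wedge g=f_n$ for every $n\ge1$.
   Context: $\mathcal{V}_{\sigma\ell\mathbb{G}}$ is the infinitary variety of algebras $(G,0,+,-,\vee,\wedge,\bigvee^-)$, $\bigvee^-$ of countably infinite arity with $\bigvee_{n\ge1}^g f_n:=\bigvee^-(g,f_1,f_2,\dots)$, satisfying the $\ell$-group axioms and (A1) $\bigvee_{n\ge1}^g f_n=\bigvee_{n\ge1}^g(f_n\wedge g)$; (A2) $\bigvee_{n\ge1}^g f_n=(f_1\wedge g)\vee\bigvee^-(g,f_2,f_3,\dots)$; (A3) $\bigvee_{n\ge1}^g(f_n\wedge h)\le h$ ($a\le b$ meaning $a\wedge b=a$). The supremum refers to the lattice order of $G$. *)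

(** The sequence argument s : nat -> G stands for (f_1, f_2, ...), i.e.
    s k = f_{k+1};  bvee g s = bigvee^-(g, f_1, f_2, ...) = \bigvee^g_{n>=1} f_n. *)
Record sigmaLGroup := {
  carrier :> Type;
  zero : carrier;
  add : carrier -> carrier -> carrier;
  opp : carrier -> carrier;
  join : carrier -> carrier -> carrier;
  meet : carrier -> carrier -> carrier;
  bvee : carrier -> (nat -> carrier) -> carrier;
  addA : forall x y z, add x (add y z) = add (add x y) z;
  add0l : forall x, add zero x = x;
  add0r : forall x, add x zero = x;
  addNl : forall x, add (opp x) x = zero;
  addNr : forall x, add x (opp x) = zero;
  joinA : forall x y z, join x (join y z) = join (join x y) z;
  meetA : forall x y z, meet x (meet y z) = meet (meet x y) z;
  joinC : forall x y, join x y = join y x;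
  meetC : forall x y, meet x y = meet y x;
  joinKmeet : forall x y, join x (meet x y) = x;
  meetKjoin : forall x y, meet x (join x y) = x;
  addDjoinl : forall x y z, add x (join y z) = join (add x y) (add x z);
  addDjoinr : forall x y z, add (join y z) x = join (add y x) (add z x);
  addDmeetl : forall x y z, add x (meet y z) = meet (add x y) (add x z);
  addDmeetr : forall x y z, add (meet y z) x = meet (add y x) (add z x);
  bveeA1 : forall g s, bvee g s = bvee g (fun k => meet (s k) g);
  bveeA2 : forall g s, bvee g s = join (meet (s 0) g) (bvee g (fun k => s (S k)));
  (* (A3): a <= b means a /\ b = a *)
  bveeA3 : forall g h s,
      meet (bvee g (fun k => meet (s k) h)) h = bvee g (fun k => meet (s k) h)
}.

Arguments zero {_}.
Arguments add {_}.
Arguments opp {_}.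
Arguments join {_}.
Arguments meet {_}.
Arguments bvee {_}.

Definition le {G : sigmaLGroup} (a b : G) : Prop := meet a b = a.

Definition is_sup {G : sigmaLGroup} (s : nat -> G) (g : G) : Prop :=
  (forall k, le (s k) g) /\ (forall u : G, (forall k, le (s k) u) -> le g u).

(** By (A2) every [f_n /\ g] lies below [bvee g f], and by (A1) and (A3) [bvee g f]
    lies below every upper bound of the [f_n /\ g]; so [bvee g f] is the supremum of
    the truncated sequence [(f_n /\ g)_n].  The theorem follows because a supremum is
    unique and, when every [f_n] lies below [g], truncation at [g] changes nothing. *)

From Stdlib Require Import FunctionalExtensionality.

Section SigmaLGroupOrder.
Variable G : sigmaLGroup.
Implicit Types (a b c g u : G) (s : nat -> G).

Lemma le_trans a b c : le a b -> le b c -> le a c.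
Proof. unfold le; intros Hab Hbc. now rewrite <- Hab, <- meetA, Hbc. Qed.

Lemma le_antisym a b : le a b -> le b a -> a = b.
Proof. unfold le; intros Hab Hba. now rewrite <- Hab, meetC. Qed.

Lemma le_joinl a b : le a (join a b).
Proof. apply meetKjoin. Qed.

Lemma le_joinr a b : le b (join a b).
Proof. unfold le. rewrite joinC. apply meetKjoin. Qed.

Lemma is_sup_unique s a b : is_sup s a -> is_sup s b -> a = b.
Proof.
  intros [ubA leastA] [ubB leastB].
  apply le_antisym; [apply leastA | apply leastB]; assumption.
Qed.

Lemma meet_seq_of_le s u : (forall k, le (s k) u) -> (fun k => meet (s k) u) = s.
Proof. intros ub. apply functional_extensionality. exact ub. Qed.

Lemma le_meet_bvee g k : forall s, le (meet (s k) g) (bvee g s).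
Proof.
  induction k as [|k IH]; intros s; rewrite (bveeA2 G g s).
  - apply le_joinl.
  - apply le_trans with (bvee g (fun k => s (S k))).
    + apply (IH (fun k => s (S k))).
    + apply le_joinr.
Qed.

Lemma bvee_le_ub g s u : (forall k, le (s k) u) -> le (bvee g s) u.
Proof.
  intros ub. pose proof (bveeA3 G g u s) as H.
  rewrite (meet_seq_of_le s u ub) in H. exact H.
Qed.

Lemma is_sup_bvee g s : is_sup (fun k => meet (s k) g) (bvee g s).
Proof.
  split.
  - intros k. apply le_meet_bvee.
  - intros u ub. rewrite (bveeA1 G g s). now apply bvee_le_ub.
Qed.

Lemma is_sup_bvee_of_le g s : (forall k, le (s k) g) -> is_sup s (bvee g s).
Proof.
  intros below. pose proof (is_sup_bvee g s) as H.
  rewrite (meet_seq_of_le s g below) in H. exact H.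
Qed.

End SigmaLGroupOrder.

Theorem mainTheorem19 (G : sigmaLGroup) (f : nat -> G) (g : G) :
  is_sup f g <-> (g = bvee g f /\ forall k, meet (f k) g = f k).
Proof.
  split.
  - intros Hsup.
    assert (below : forall k, le (f k) g) by apply Hsup.
    split; [| exact below].
    exact (is_sup_unique G f _ _ Hsup (is_sup_bvee_of_le G g f below)).
  - intros [Hg below].
    pose proof (is_sup_bvee_of_le G g f below) as H. rewrite <- Hg in H. exact H.
Qed.
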